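(* Let $\mathcal F\subseteq 2^{[n]}$ be a non-empty simply rooted family of sets such that $\emptyset\notin\mathcal F$. For $k\ge 1$ let $c_k$ be the number of sets $A\in\mathcal F$ with $|A|=k$ such that $[i,A]\subseteq\mathcal F$ for every $i\in A$, and let $c_0=1$. Then the Euler characteristic of $X(\mathcal F)$ equals $$1-\sum_{k=0}^n(-1)^k c_k.$$
   Context: $[n]=\{1,\dots,n\}$, $2^{[n]}$ its power set, $[A,B]=\{C\in 2^{[n]}: A\subseteq C\subseteq B\}$, $[i,A]=[\{i\},A]$. A family $\mathcal F\subseteq 2^{[n]}$ is simply rooted if for every non-empty $A\in\mathcal F$ there is $i\in A$ with $[i,A]\subseteq\mathcal F$. The set of cubes of $\mathcal F$ is $\mathcal C(\mathcal F)=\{[A,B]: A\subseteq B,\ [A,B]\subseteq\mathcal F\}$. For $A\subseteq B$, $|[A,B]|=I_1\times\dots\times I_n\subseteq\mathbb R^n$ with $I_i=\{1\}$ if $i\in A$, $I_i=[0,1]$ if $i\in B\setminus A$, $I_i=\{0\}$ if $i\notin B$. The geometric realization of $\mathcal F$ is the cubical set $X(\mathcal F)=\bigcup_{[A,B]\in\mathcal C(\mathcal F)}|[A,B]|$. The Euler characteristic is that of the cubical homology of $X(\mathcal F)$ (alternating sum of ranks of its cubical homology groups). *)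

From mathcomp Require Import all_boot all_order all_algebra.
Set Implicit Arguments. Unset Strict Implicit. Unset Printing Implicit Defensive.
Import GRing.Theory Num.Theory.
Local Open Scope ring_scope.

Section Cubical.
Variable n : nat.
Notation sset := {set 'I_n}.

Definition interval (A B : sset) : {set sset} :=
  [set C : sset | (A \subset C) && (C \subset B)].

Definition simply_rooted (F : {set sset}) : Prop :=
  forall A, A \in F -> A != set0 -> exists2 i, i \in A & interval [set i] A \subset F.

(* Cubes [A,B] of C(F) of dimension k = |B \ A| (these are exactly the
   elementary cubes of the cubical set X(F)). *)
Definition cubes (F : {set sset}) (k : nat) : {set sset * sset} :=
  [set Q : sset * sset | [&& Q.1 \subset Q.2, interval Q.1 Q.2 \subset F & #|Q.2 :\: Q.1| == k]].

(* Coefficient of elementary cube P in the cubical boundary of Q: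
   for each free coordinate j (the m-th free one, m counted from 0) we get
   (-1)^m ( upper face (x_j = 1, i.e. j added to A) - lower face (x_j = 0,
   i.e. j removed from B) ). *)
Definition bd (Q P : sset * sset) : rat :=
  \sum_(j in Q.2 :\: Q.1)
     (-1) ^+ #|[set i in Q.2 :\: Q.1 | (i < j)%N]| *
     ((P == (j |: Q.1, Q.2))%:R - (P == (Q.1, Q.2 :\ j))%:R).

Definition bdmx (F : {set sset}) (k : nat) : 'M[rat]_(#|cubes F k.+1|, #|cubes F k|) :=
  \matrix_(i, j) bd (enum_val i) (enum_val j).

Definition bdrank (F : {set sset}) (k : nat) : nat :=
  if k is k'.+1 then \rank (bdmx F k') else 0%N.

Definition betti (F : {set sset}) (k : nat) : int :=
  (#|cubes F k|%:Z - (bdrank F k)%:Z - (bdrank F k.+1)%:Z).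

(* cubes have dimension <= n, so the sum is complete *)
Definition euler_char (F : {set sset}) : int :=
  \sum_(k < n.+1) (-1) ^+ k * betti F k.

Definition ck (F : {set sset}) (k : nat) : nat :=
  if k == 0%N then 1%N
  else #|[set A : sset in F | (#|A| == k) && [forall i in A, interval [set i] A \subset F]]|.

End Cubical.

From Pilot Require Import Defs.
From mathcomp Require Import all_boot all_order all_algebra.
From mathcomp Require Import ring.

Set Implicit Arguments.
Unset Strict Implicit.
Unset Printing Implicit Defensive.

Import GRing.Theory.
Local Open Scope ring_scope.

(* The Euler characteristic of X(F) is the alternating count of its cubes.
   Grouping the cubes [A, B] by their top B, the set B contributes (-1)^|B|
   times s(B) = sum of (-1)^|A| over the A with [A, B] in F.  If B is not in F
   then s(B) = 0.  Otherwise a root i of B gives [A + i, B] in F for every A,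
   and [A, B] in F iff [A, B - i] in F, so s(B) = s(B - i) - [B - i empty].
   By induction s(B) = [B empty] - [B is rooted at each of its points], and
   summing over B gives 1 - sum_k (-1)^k c_k. *)

Section AlternatingSums.
Variable R : comPzRingType.

Lemma sum_alternating_telescope (r : nat -> R) m :
  \sum_(k < m) (-1) ^+ k * (r k + r k.+1) = r 0%N - (-1) ^+ m * r m.
Proof.
elim: m => [|m IHm]; first by rewrite big_ord0 expr0 mul1r subrr.
by rewrite big_ord_recr /= IHm exprS; ring.
Qed.

Lemma sum_by_level (T : finType) (N : nat) (p : pred T) (d : T -> nat)
    (w : nat -> R) :
    (forall x, p x -> d x < N)%N ->
  \sum_(x | p x) w (d x) = \sum_(k < N) w k * #|[set x | p x & d x == k]|%:R.
Proof.
move=> ltdN.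
transitivity (\sum_(k < N) \sum_(x | p x && (d x == k)) w k); last first.
  apply: eq_bigr => k _; rewrite mulr_natr -sumr_const.
  by apply: eq_bigl => x; rewrite inE.
rewrite (exchange_big_dep p) /= => [|k x _ /andP[]//].
apply: eq_bigr => x px; rewrite (big_pred1 (Ordinal (ltdN x px))) // => k.
by rewrite px eq_sym.
Qed.

Lemma sign_setD (T : finType) (A B : {set T}) : A \subset B ->
  (-1) ^+ #|B :\: A| = (-1) ^+ #|B| * (-1) ^+ #|A| :> R.
Proof.
move=> subAB.
have -> : #|B| = (#|B :\: A| + #|A|)%N.
  by rewrite cardsD (setIidPr subAB) subnK // subset_leq_card.
by rewrite exprD -mulrA -exprMn mulrNN mulr1 expr1n mulr1.
Qed.

Lemma sum_subset_setD1 (T : finType) (B : {set T}) i (f : {set T} -> R) :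
    i \in B ->
  \sum_(A : {set T} | A \subset B) f A =
  \sum_(A : {set T} | A \subset B :\ i) (f A + f (i |: A)).
Proof.
move=> iB; rewrite big_split /= (bigID (fun A : {set T} => i \in A)) /= addrC.
congr (_ + _); first by apply: eq_bigl => A; rewrite subsetD1.
rewrite (reindex_onto (fun A : {set T} => i |: A) (fun A => A :\ i)) /=;
  last first.
  by move=> A /andP[_ iA]; apply: setD1K.
apply: eq_bigl => A; rewrite subsetD1 setU11 andbT.
have [iA|iA] /= := boolP (i \in A).
  rewrite andbF; apply/negbTE/andP => -[_ /eqP eqA].
  by have := setD11 i (i |: A); rewrite eqA iA.
by rewrite setU1K // eqxx !andbT subUset sub1set iB.
Qed.

Lemma sum_subset_sign (T : finType) (B : {set T}) :
  \sum_(A : {set T} | A \subset B) (-1) ^+ #|A| = (B == set0)%:R :> R.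
Proof.
have [->|/set0Pn[i iB]] := eqVneq B set0.
  by rewrite (big_pred1 set0) ?cards0 // => A; rewrite subset0.
rewrite (sum_subset_setD1 _ iB) big1 // => A; rewrite subsetD1 => /andP[_ iA].
by rewrite cardsU1 iA exprS mulN1r addrN.
Qed.

End AlternatingSums.

Section CubeSums.
Variable n : nat.
Implicit Types (F : {set {set 'I_n}}) (A B : {set 'I_n}).

(* The bare name [interval] refers to mathcomp's type of intervals. *)
Definition fully_rooted F B :=
  [forall i in B, Defs.interval [set i] B \subset F].

Definition cube_sum F B : int :=
  \sum_(A : {set 'I_n} | (A \subset B) && (Defs.interval A B \subset F))
    (-1) ^+ #|A|.

Lemma interval_top A B : A \subset B -> B \in Defs.interval A B.
Proof. by move=> subAB; rewrite inE subAB subxx. Qed.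

Lemma interval_subl A A' B : A' \subset A ->
  Defs.interval A B \subset Defs.interval A' B.
Proof.
move=> subA'A; apply/subsetP => C; rewrite !inE => /andP[subAC ->].
by rewrite (subset_trans subA'A subAC).
Qed.

Lemma fully_rooted0 F : fully_rooted F set0.
Proof. by apply/forall_inP => i; rewrite inE. Qed.

Lemma fully_rooted_mem F B : B != set0 -> fully_rooted F B -> B \in F.
Proof.
case/set0Pn => i iB /forallP/(_ i); rewrite iB => /subsetP; apply.
by rewrite interval_top ?sub1set.
Qed.

Lemma interval_sub_setD1 F A B i : Defs.interval [set i] B \subset F ->
  (Defs.interval A B \subset F) = (Defs.interval A (B :\ i) \subset F).
Proof.
move=> iBF; apply/idP/idP => ABF;
  apply/subsetP => C; rewrite inE => /andP[subAC subCB].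
  by rewrite (subsetP ABF) // inE subAC (subset_trans subCB (subD1set B i)).
have [iC|iC] := boolP (i \in C).
  by apply: (subsetP iBF); rewrite inE sub1set iC subCB.
by apply: (subsetP ABF); rewrite inE subAC subsetD1 subCB iC.
Qed.

Lemma fully_rooted_setD1 F B i : Defs.interval [set i] B \subset F ->
  fully_rooted F B = fully_rooted F (B :\ i).
Proof.
move=> iBF; apply/forall_inP/forall_inP => rootedB j jB.
  by rewrite -(interval_sub_setD1 _ iBF) rootedB // (subsetP (subD1set B i)).
have [->//|ji] := eqVneq j i.
by rewrite (interval_sub_setD1 _ iBF) rootedB // !inE ji.
Qed.

Lemma cube_sum_notin F B : B \notin F -> cube_sum F B = 0.
Proof.
move=> BnF; apply: big1 => A /andP[subAB ABF].
by rewrite (subsetP ABF _ (interval_top subAB)) in BnF.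
Qed.

Lemma cube_sum_setD1 F B i : i \in B -> Defs.interval [set i] B \subset F ->
  cube_sum F B = cube_sum F (B :\ i) - (B :\ i == set0)%:R.
Proof.
move=> iB iBF; rewrite /cube_sum big_mkcondr (sum_subset_setD1 _ iB).
rewrite -(sum_subset_sign _ (B :\ i)) big_mkcondr -sumrB.
apply: eq_bigr => A; rewrite subsetD1 => /andP[_ iA].
have -> : Defs.interval (i |: A) B \subset F.
  by apply: subset_trans iBF; rewrite interval_subl // sub1set setU11.
by rewrite -(interval_sub_setD1 _ iBF) cardsU1 iA exprS mulN1r.
Qed.

Lemma cube_sum_simply_rooted F B : set0 \notin F -> simply_rooted F ->
  cube_sum F B = (B == set0)%:R - (fully_rooted F B)%:R.
Proof.
move=> F0 rootedF; have [m] := ubnP #|B|; elim: m B => // m IHm B.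
rewrite ltnS => leBm.
have [BF|BnF] := boolP (B \in F); last first.
  rewrite cube_sum_notin //; have [->|B0] := eqVneq B set0.
    by rewrite fully_rooted0.
  by rewrite (contraNF (fully_rooted_mem B0)) // subrr.
have B0 : B != set0 by apply: contraNneq F0 => <-.
have [i iB iBF] := rootedF B BF B0.
rewrite (fully_rooted_setD1 iBF) (cube_sum_setD1 iB iBF) IHm ?(negbTE B0).
  by rewrite addrAC subrr !sub0r.
by move: leBm; rewrite (cardsD1 i B) iB.
Qed.

Lemma cubes_eq0 F k : (n < k)%N -> cubes F k = set0.
Proof.
move=> ltnk; apply/setP => Q; rewrite !inE; apply/and3P => -[_ _ /eqP dimQ].
by move: (max_card (mem (Q.2 :\: Q.1))); rewrite dimQ card_ord leqNgt ltnk.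
Qed.

Lemma euler_char_cubes F :
  euler_char F = \sum_(k < n.+1) (-1) ^+ k * #|cubes F k|%:Z.
Proof.
have rank_last : bdrank F n.+1 = 0%N.
  apply/eqP; rewrite -leqn0; apply: leq_trans (rank_leq_row _) _.
  by rewrite cubes_eq0 ?cards0.
rewrite /euler_char /betti.
under eq_bigr do rewrite -addrA -opprD mulrBr.
rewrite sumrB (sum_alternating_telescope (fun k => (bdrank F k)%:Z)).
by rewrite rank_last mulr0 !subr0.
Qed.

Lemma euler_char_cube_sum F :
  euler_char F = \sum_(B : {set 'I_n}) (-1) ^+ #|B| * cube_sum F B.
Proof.
pose is_cube (Q : {set 'I_n} * {set 'I_n}) :=
  (Q.1 \subset Q.2) && (Defs.interval Q.1 Q.2 \subset F).
have cubesE k : cubes F k = [set Q | is_cube Q & #|Q.2 :\: Q.1| == k].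
  by apply/setP => Q; rewrite !inE andbA.
rewrite euler_char_cubes.
under eq_bigr do rewrite cubesE -natz.
rewrite -sum_by_level => [|Q _]; last first.
  by rewrite ltnS (leq_trans (max_card _)) ?card_ord.
rewrite -(pair_big_dep xpredT (fun A B => is_cube (A, B))
  (fun A B => (-1) ^+ #|B :\: A|)) (exchange_big_dep xpredT) //=.
apply: eq_bigr => B _; rewrite /cube_sum big_distrr /=.
by apply: eq_bigr => A /andP[subAB _]; rewrite sign_setD.
Qed.

Lemma sum_ck F :
  \sum_(k < n.+1) (-1) ^+ k * (ck F k)%:Z =
  \sum_(B : {set 'I_n}) (-1) ^+ #|B| * (fully_rooted F B)%:R.
Proof.
under [RHS]eq_bigr do rewrite mulr_natr mulrb.
rewrite -big_mkcond (sum_by_level (N := n.+1) (d := fun B => #|B|))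
  => [|B _]; last first.
  by rewrite ltnS (leq_trans (max_card _)) ?card_ord.
apply: eq_bigr => -[[|k] ltkn] _; rewrite natz; congr (_ * _%:Z).
  rewrite /ck /= -(cards1 (set0 : {set 'I_n})); apply: eq_card => B.
  by rewrite !inE cards_eq0 andbC; case: eqP => [->|//]; rewrite fully_rooted0.
rewrite /ck /=; apply: eq_card => B; rewrite !inE andbC.
have [sizeB|_] := altP eqP; last by rewrite andbF.
rewrite andbT andb_idr // => rootedB.
by rewrite fully_rooted_mem // -card_gt0 sizeB.
Qed.

End CubeSums.

Theorem corollary2 (n : nat) (F : {set {set 'I_n}}) :
  F != set0 -> set0 \notin F -> simply_rooted F ->
  euler_char F = 1 - \sum_(k < n.+1) (-1) ^+ k * (ck F k)%:Z.
Proof.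
move=> _ F0 rootedF.
rewrite euler_char_cube_sum sum_ck.
under eq_bigr do rewrite cube_sum_simply_rooted // mulrBr.
rewrite sumrB (bigD1 set0) //= big1 => [|B /negbTE->]; last by rewrite mulr0.
by rewrite cards0 eqxx mulr1 addr0.
Qed.
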